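(* For every integer $n \ge 5$, $\gamma_R(P(n,2)) \le \left\lceil \frac{8n}{7}\right\rceil$.
   Context: For integers $n \ge 3$ and $1 \le k < n/2$, the generalized Petersen graph $P(n,k)$ has vertex set $\{v_i, u_i : 0 \le i \le n-1\}$ and edge set $\{v_iv_{i+1},\ v_iu_i,\ u_iu_{i+k} : 0 \le i \le n-1\}$, with subscripts taken modulo $n$. A Roman domination function (RDF) of a graph $G$ is a function $f: V(G)\to\{0,1,2\}$ such that every vertex $u$ with $f(u)=0$ is adjacent to at least one vertex $v$ with $f(v)=2$. Its weight is $\sum_{u\in V(G)} f(u)$. The Roman domination number $\gamma_R(G)$ is the minimum weight of an RDF of $G$. *)

From mathcomp Require Import all_boot.
Set Implicit Arguments. Unset Strict Implicit. Unset Printing Implicit Defensive.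

(* Generalized Petersen graph P(n,k): vertices 'I_n + 'I_n,
   inl i = v_i (outer), inr i = u_i (inner).
   Edges: v_i v_{i+1}, v_i u_i, u_i u_{i+k}  (indices mod n). *)
Definition gp_adj (n k : nat) (x y : 'I_n + 'I_n) : bool :=
  match x, y with
  | inl i, inl j => (j == (i + 1) %% n :> nat) || (i == (j + 1) %% n :> nat)
  | inl i, inr j => i == j :> nat
  | inr i, inl j => i == j :> nat
  | inr i, inr j => (j == (i + k) %% n :> nat) || (i == (j + k) %% n :> nat)
  end.

Definition is_RDF (T : finType) (adj : rel T) (f : {ffun T -> 'I_3}) : bool :=
  [forall u, (val (f u) == 0) ==> [exists v, adj u v && (val (f v) == 2)]].

Definition RDF_weight (T : finType) (f : {ffun T -> 'I_3}) : nat :=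
  \sum_(u : T) val (f u).

(* Roman domination number: minimum weight of an RDF.  The default value
   2*|T| is the weight of the constant-2 function, which is always an RDF,
   so it does not affect the minimum. *)
Definition gammaR (T : finType) (adj : rel T) : nat :=
  \big[minn/(#|T|).*2]_(f : {ffun T -> 'I_3} | is_RDF adj f) RDF_weight f.
Arguments gp_adj n k x y : clear implicits.

From mathcomp Require Import all_boot zify.
Set Implicit Arguments. Unset Strict Implicit. Unset Printing Implicit Defensive.

(* Label each column (v_i, u_i) of P(n,2) by a pair of values in {0,1,2}.  Whether
   this labelling is a Roman domination function is a condition on each cyclic
   window of five consecutive columns.  Repeating the block
   (0,0)(1,0)(0,2)(0,2)(1,0)(0,0)(2,0) of 7 columns and weight 8, followed by one
   of seven tails of length 7..13 absorbing n mod 7, gives an RDF of weight at most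
   ceil(8n/7).  A window of length 5 meets at most two consecutive copies of a
   block of length >= 4, so the window condition for any number of copies follows
   from the cases of 0, 1 and 2 copies, which are checked by computation; n = 5, 6
   are handled by explicit labellings. *)

Lemma gammaR_le_weight (T : finType) (adj : rel T) (f : {ffun T -> 'I_3}) :
  is_RDF adj f -> gammaR adj <= RDF_weight f.
Proof.
rewrite /gammaR => rdf_f.
have : f \in index_enum {ffun T -> 'I_3} by rewrite mem_index_enum.
elim: (index_enum _) => [//|g r IHr]; rewrite inE big_cons.
case/orP => [/eqP <-|/IHr le_r]; first by rewrite rdf_f geq_minl.
by case: ifP => _ //; rewrite geq_min le_r orbT.
Qed.

Definition offset n (i : 'I_n) d : 'I_n :=
  Ordinal (ltn_pmod (i + n + d - 2) (leq_ltn_trans (leq0n i) (ltn_ord i))).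

Lemma offset_center n (i : 'I_n) : offset i 2 = i.
Proof. by apply: val_inj; rewrite /= addnK modnDr modn_small. Qed.

Lemma gp_adj_offset_outer n (i : 'I_n) d :
  (d == 1) || (d == 3) -> gp_adj n 2 (inl i) (inl (offset i d)).
Proof.
case/orP=> /eqP-> /=; apply/orP; [right | left]; apply/eqP.
- rewrite modnDml (_ : i + n + 1 - 2 + 1 = i + n); last by have := ltn_ord i; lia.
  by rewrite modnDr modn_small.
- by rewrite (_ : i + n + 3 - 2 = i + 1 + n) ?modnDr //; lia.
Qed.

Lemma gp_adj_offset_inner n (i : 'I_n) d : 2 <= n ->
  (d == 0) || (d == 4) -> gp_adj n 2 (inr i) (inr (offset i d)).
Proof.
move=> n2; case/orP=> /eqP-> /=; apply/orP; [right | left]; apply/eqP.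
- rewrite modnDml (_ : i + n + 0 - 2 + 2 = i + n); last by lia.
  by rewrite modnDr modn_small.
- by rewrite (_ : i + n + 4 - 2 = i + 2 + n) ?modnDr //; lia.
Qed.

Notation column := (nat * nat)%type.

Definition labelling (s : seq column) : {ffun 'I_(size s) + 'I_(size s) -> 'I_3} :=
  [ffun x : 'I_(size s) + 'I_(size s) =>
     match x with
     | inl i => inord (nth (0, 0) s i).1
     | inr i => inord (nth (0, 0) s i).2
     end].

Definition small_labels (s : seq column) :=
  all (fun a : column => (a.1 <= 2) && (a.2 <= 2)) s.

Definition word_weight (s : seq column) := sumn [seq a.1 + a.2 | a <- s].

Section Labelling.

Variable s : seq column.
Hypothesis small : small_labels s.

Lemma labelling_small (i : 'I_(size s)) :
  ((nth (0, 0) s i).1 <= 2) && ((nth (0, 0) s i).2 <= 2).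
Proof. exact: allP small _ (mem_nth (0, 0) (ltn_ord i)). Qed.

Lemma labelling_inl (i : 'I_(size s)) : val (labelling s (inl i)) = (nth (0, 0) s i).1.
Proof. by case/andP: (labelling_small i) => le1 _; rewrite ffunE /= inordK. Qed.

Lemma labelling_inr (i : 'I_(size s)) : val (labelling s (inr i)) = (nth (0, 0) s i).2.
Proof. by case/andP: (labelling_small i) => _ le2; rewrite ffunE /= inordK. Qed.

End Labelling.

Lemma labelling_weight s : small_labels s -> RDF_weight (labelling s) = word_weight s.
Proof.
move=> small; rewrite /RDF_weight big_sumType /word_weight sumnE big_map.
rewrite (big_nth (0, 0)) big_mkord big_split /=.
by congr (_ + _); apply: eq_bigr => i _; rewrite ?labelling_inl ?labelling_inr.
Qed.

(* Columns [i-2 .. i+2]: [v_i] sees [v_(i-1)], [v_(i+1)], [u_i], and [u_i] sees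
   [u_(i-2)], [u_(i+2)], [v_i]. *)
Definition window_ok (a b c d e : column) : bool :=
  ((c.1 != 0) || (b.1 == 2) || (d.1 == 2) || (c.2 == 2)) &&
  ((c.2 != 0) || (c.1 == 2) || (a.2 == 2) || (e.2 == 2)).

Definition window_at (x : seq column) p :=
  window_ok (nth (0, 0) x p) (nth (0, 0) x (p + 1)) (nth (0, 0) x (p + 2))
            (nth (0, 0) x (p + 3)) (nth (0, 0) x (p + 4)).

Definition windows_ok (x : seq column) := all (window_at x) (iota 0 (size x - 4)).

Lemma windows_okP x : reflect (forall p, p + 4 < size x -> window_at x p) (windows_ok x).
Proof.
apply: (iffP allP) => ok p; rewrite ?mem_iota => lt_p; apply: ok; rewrite ?mem_iota; lia.
Qed.

Lemma window_at_catl x y p : p + 4 < size x -> window_at (x ++ y) p = window_at x p.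
Proof.
move=> lt_p; rewrite /window_at !nth_cat.
by do 5 (case: ifP => [_ | /negP ?]; last by exfalso; lia).
Qed.

Lemma window_at_catr x y p : window_at (x ++ y) (size x + p) = window_at y p.
Proof.
by rewrite /window_at -!addnA !nth_cat !ltnNge !leq_addr /= !addKn.
Qed.

Lemma windows_ok_catl x y : windows_ok (x ++ y) -> windows_ok x.
Proof.
move=> /windows_okP ok; apply/windows_okP => p lt_p.
by rewrite -(window_at_catl y lt_p); apply: ok; rewrite size_cat; lia.
Qed.

Lemma windows_ok_catr x y : windows_ok (x ++ y) -> windows_ok y.
Proof.
move=> /windows_okP ok; apply/windows_okP => p lt_p.
by rewrite -(window_at_catr x); apply: ok; rewrite size_cat; lia.
Qed.

(* Windows have length 5, so each window of [x ++ m ++ y] lies in [x ++ m] or [m ++ y]. *)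
Lemma windows_ok_glue x m y : size m = 4 ->
  windows_ok (x ++ m) -> windows_ok (m ++ y) -> windows_ok (x ++ m ++ y).
Proof.
move=> size_m /windows_okP ok_xm /windows_okP ok_my; apply/windows_okP => p.
rewrite !size_cat size_m => lt_p; case: (ltnP p (size x)) => [lt_px | le_xp].
  by rewrite catA window_at_catl ?ok_xm // size_cat size_m; lia.
by rewrite -(subnKC le_xp) window_at_catr ok_my // size_cat size_m; lia.
Qed.

Lemma windows_ok_iter u p v : 4 <= size p ->
  windows_ok (u ++ v) -> windows_ok (u ++ p ++ v) -> windows_ok (u ++ p ++ p ++ v) ->
  forall k, windows_ok (u ++ iter k (cat p) v).
Proof.
move=> size_p ok0 ok1 ok2 [//|k]; elim: k => [//|k IHk].
have -> : u ++ iter k.+2 (cat p) v = (u ++ p) ++ take 4 p ++ (drop 4 p ++ iter k (cat p) v).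
  by rewrite /= -!catA (catA (take 4 p)) cat_take_drop.
apply: windows_ok_glue; first exact: size_takel.
  apply: (@windows_ok_catl _ (drop 4 p ++ v)).
  by rewrite -!catA (catA (take 4 p)) cat_take_drop.
apply: (@windows_ok_catr u).
by rewrite (catA (take 4 p)) cat_take_drop.
Qed.

Definition cyclic_ext (s : seq column) := drop (size s - 2) s ++ s ++ take 2 s.

Lemma nth_cyclic_ext s (i : 'I_(size s)) d : 2 <= size s -> d <= 4 ->
  nth (0, 0) (cyclic_ext s) (i + d) = nth (0, 0) s (offset i d).
Proof.
move=> s2 d4; have lt_i := ltn_ord i; rewrite /cyclic_ext /= nth_cat size_drop.
rewrite (_ : size s - (size s - 2) = 2); last by lia.
case: ltnP => [lt_id | le_id].
  by rewrite nth_drop modn_small; [congr nth; lia | lia].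
rewrite nth_cat; case: ltnP => [lt_in | le_in].
  rewrite (_ : i + size s + d - 2 = i + d - 2 + size s); last by lia.
  by rewrite modnDr modn_small.
rewrite nth_take; last by lia.
rewrite (_ : i + size s + d - 2 = i + d - 2 - size s + size s + size s); last by lia.
by rewrite !modnDr modn_small; [congr nth; lia | lia].
Qed.

Lemma window_cyclic_ext s (i : 'I_(size s)) : 2 <= size s -> windows_ok (cyclic_ext s) ->
  window_ok (nth (0, 0) s (offset i 0)) (nth (0, 0) s (offset i 1)) (nth (0, 0) s i)
            (nth (0, 0) s (offset i 3)) (nth (0, 0) s (offset i 4)).
Proof.
move=> s2 /windows_okP /(_ i); rewrite /window_at -[X in nth _ _ X]addn0.
rewrite !nth_cyclic_ext // offset_center; apply.
by rewrite /cyclic_ext !size_cat size_drop size_takel //; have := ltn_ord i; lia.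
Qed.

Lemma labelling_is_RDF s : 2 <= size s -> small_labels s -> windows_ok (cyclic_ext s) ->
  is_RDF (gp_adj (size s) 2) (labelling s).
Proof.
move=> s2 small ok; apply/forallP => - [] i; apply/implyP;
  case/andP: (window_cyclic_ext i s2 ok) => outer inner.
- rewrite labelling_inl // => /eqP c0; rewrite c0 /= in outer.
  case/orP: outer => [/orP [] b2 | c2]; apply/existsP.
  + by exists (inl (offset i 1)); rewrite gp_adj_offset_outer //= labelling_inl.
  + by exists (inl (offset i 3)); rewrite gp_adj_offset_outer //= labelling_inl.
  + by exists (inr i); rewrite /= eqxx labelling_inr.
- rewrite labelling_inr // => /eqP c0; rewrite c0 /= in inner.
  case/orP: inner => [/orP [] a2 | e2]; apply/existsP.
  + by exists (inl i); rewrite /= eqxx labelling_inl.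
  + by exists (inr (offset i 0)); rewrite gp_adj_offset_inner //= labelling_inr.
  + by exists (inr (offset i 4)); rewrite gp_adj_offset_inner //= labelling_inr.
Qed.

Lemma gammaR_le_word s : 2 <= size s -> small_labels s -> windows_ok (cyclic_ext s) ->
  gammaR (gp_adj (size s) 2) <= word_weight s.
Proof.
move=> s2 small ok; rewrite -labelling_weight //.
exact/gammaR_le_weight/labelling_is_RDF.
Qed.

Lemma iter_cat_catr (p : seq column) k x y : iter k (cat p) x ++ y = iter k (cat p) (x ++ y).
Proof. by elim: k => //= k <-; rewrite catA. Qed.

Lemma size_iter_cat (p : seq column) k x : size (iter k (cat p) x) = k * size p + size x.
Proof. by elim: k => //= k IHk; rewrite size_cat IHk mulSn addnA. Qed.

Lemma word_weight_cat x y : word_weight (x ++ y) = word_weight x + word_weight y.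
Proof. by rewrite /word_weight map_cat sumn_cat. Qed.

Lemma word_weight_iter_cat p k x :
  word_weight (iter k (cat p) x) = k * word_weight p + word_weight x.
Proof. by elim: k => //= k IHk; rewrite word_weight_cat IHk mulSn addnA. Qed.

Lemma small_labels_iter_cat p k x :
  small_labels p -> small_labels x -> small_labels (iter k (cat p) x).
Proof.
by move=> small_p small_x; elim: k => //= k IHk; rewrite [small_labels _]all_cat; apply/andP.
Qed.

Lemma cyclic_ext_iter_cat p t k : 2 <= size p -> 2 <= size t -> take 2 t = take 2 p ->
  cyclic_ext (iter k (cat p) t) = drop (size t - 2) t ++ iter k (cat p) (t ++ take 2 p).
Proof.
move=> p2 t2 tp; rewrite /cyclic_ext -iter_cat_catr; congr (_ ++ _ ++ _).
  rewrite -[t in iter _ _ t]cat0s -iter_cat_catr size_cat drop_cat ltnNge.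
  set f := iter k (cat p) [::]; have -> : size f <= size f + size t - 2 by lia.
  by congr drop; lia.
by case: k => [//|k]; rewrite /= takel_cat.
Qed.

(* [take 2 t = take 2 p] makes the wrap-around of [iter k (cat p) t] independent of [k]. *)
Definition tail_ok (p t : seq column) :=
  [&& 2 <= size t, take 2 t == take 2 p, small_labels t &
      all (fun k => windows_ok (drop (size t - 2) t ++ iter k (cat p) (t ++ take 2 p)))
          (iota 0 3)].

Lemma gammaR_le_iter_cat p t k : 4 <= size p -> small_labels p -> tail_ok p t ->
  gammaR (gp_adj (k * size p + size t) 2) <= k * word_weight p + word_weight t.
Proof.
move=> p4 small_p /and4P [t2 /eqP tp small_t /and3P [ok0 ok1 /andP [ok2 _]]].
rewrite -size_iter_cat -word_weight_iter_cat; apply: gammaR_le_word.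
- by rewrite size_iter_cat; lia.
- exact: small_labels_iter_cat.
- by rewrite cyclic_ext_iter_cat //; [apply: windows_ok_iter | lia].
Qed.

Definition block : seq column := [:: (0,0); (1,0); (0,2); (0,2); (1,0); (0,0); (2,0)].

Definition tail (r : nat) : seq column :=
  match r with
  | 0 => block
  | 1 => [:: (0,0);(1,0);(0,2);(0,2);(0,0);(2,0);(0,1);(2,0)]
  | 2 => [:: (0,0);(1,0);(0,2);(0,2);(0,0);(2,0);(0,1);(0,1);(2,0)]
  | 3 => [:: (0,0);(1,0);(0,2);(0,2);(1,0);(0,0);(2,0);(0,1);(0,1);(2,0)]
  | 4 => [:: (0,0);(1,0);(0,2);(0,2);(0,0);(2,0);(0,0);(0,2);(0,2);(0,0);(2,0)]
  | 5 => [:: (0,0);(1,0);(0,2);(0,2);(0,0);(2,0);(0,0);(1,0);(0,2);(0,2);(0,0);(2,0)]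
  | _ => [:: (0,0);(1,0);(0,2);(0,2);(0,0);(2,0);(0,0);(1,0);(0,2);(0,2);(1,0);(0,0);(2,0)]
  end.

Lemma tail_spec r : r < 7 ->
  [&& size (tail r) == r + 7, word_weight (tail r) <= 8 + (8 * r + 6) %/ 7
    & tail_ok block (tail r)].
Proof. by case: r => [|[|[|[|[|[|[|//]]]]]]] _; vm_compute. Qed.

Lemma gammaR_gp2_le_ge7 n : 7 <= n -> gammaR (gp_adj n 2) <= (8 * n + 6) %/ 7.
Proof.
move=> n7; have /and3P [/eqP size_t weight_t ok_t] := tail_spec (ltn_pmod n (isT : 0 < 7)).
have := gammaR_le_iter_cat (n %/ 7 - 1) (isT : 4 <= size block) isT ok_t.
rewrite (_ : _ * size block + _ = n); last by rewrite size_t /=; have := divn_eq n 7; lia.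
move/leq_trans; apply; rewrite (_ : word_weight block = 8) //.
by move: weight_t; have := divn_eq n 7; lia.
Qed.

Definition word5 : seq column := [:: (0,0); (0,0); (2,0); (0,2); (2,0)].
Definition word6 : seq column := [:: (0,0); (0,2); (0,2); (1,0); (0,0); (2,0)].

Theorem lemma2p1 (n : nat) : 5 <= n ->
  gammaR (gp_adj n 2) <= (8 * n + 6) %/ 7.
Proof.
move=> n5; case: (ltnP n 7) => [n_lt7 | /gammaR_gp2_le_ge7 //].
have [-> | ->] : n = 5 \/ n = 6 by lia.
- exact: leq_trans (@gammaR_le_word word5 isT isT isT) _.
- exact: leq_trans (@gammaR_le_word word6 isT isT isT) _.
Qed.
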